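(* Let $d\ge1$, $n\ge3$, $u\in\mathbb{C}\setminus\{0\}$. In $\mathrm{Y}_{d,n}(u)$: (1) $g_1r_{1,2}=[1+(u-1)e_1]r_{1,2}$; (2) $g_2r_{1,2}=[1+(u-1)e_2]r_{1,2}$; (3) $g_1g_2r_{1,2}=[1+(u-1)e_1+(u-1)e_{1,3}+(u-1)^2e_1e_2]r_{1,2}$; (4) $g_2g_1r_{1,2}=[1+(u-1)e_2+(u-1)e_{1,3}+(u-1)^2e_1e_2]r_{1,2}$; (5) $g_1g_2g_1r_{1,2}=[1+(u-1)(e_1+e_2+e_{1,3})+(u-1)^2(u+2)e_1e_2]r_{1,2}$.
   Context: The Yokonuma–Hecke algebra $\mathrm{Y}_{d,n}(u)$ is the unital associative $\mathbb{C}$-algebra with generators $g_1,\ldots,g_{n-1},t_1,\ldots,t_n$ and relations: $g_ig_j=g_jg_i$ for $|i-j|>1$; $g_{i+1}g_ig_{i+1}=g_ig_{i+1}g_i$; $t_it_j=t_jt_i$; $t_i^d=1$; $g_it_i=t_{i+1}g_i$; $g_it_{i+1}=t_ig_i$; $g_it_j=t_jg_i$ for $j\ne i,i+1$; $g_i^2=1+(u-1)e_i+(u-1)e_ig_i$, where $e_i=\frac1d\sum_{s=0}^{d-1}t_i^st_{i+1}^{d-s}$. Also $e_{i,j}=\frac1d\sum_{s=0}^{d-1}t_i^st_j^{d-s}$. For $w\in S_n$ with reduced expression $s_{i_1}\cdots s_{i_k}$ put $g_w=g_{i_1}\cdots g_{i_k}$; $g_{1,2}=\sum_{w\in S_3}g_w$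 and $r_{1,2}=\sum_{a,b=0}^{d-1}t_1^{a}t_2^{b-a}t_3^{-b}\,g_{1,2}$. *)

From HB Require Import structures.
From mathcomp Require Import all_boot all_algebra.
From mathcomp Require Import complex Rstruct.
Set Implicit Arguments. Unset Strict Implicit. Unset Printing Implicit Defensive.
Import GRing.Theory Num.Theory.
Local Open Scope ring_scope.

Definition CC : numClosedFieldType := (Rdefinitions.R)[i].

Section YH.
Variables (A : algType CC) (d : nat) (t g : nat -> A).

Definition eij (i j : nat) : A :=
  (d%:R : CC)^-1 *: \sum_(s < d) (t i ^+ s * t j ^+ (d - s)%N).

Definition ei (i : nat) : A := eij i i.+1.

(* integer powers of a d-th root of unity: x^k := x^(k mod d) *)
Definition tpow (x : A) (k : int) : A := x ^+ `|(k %% d%:Z)%Z|%N.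

(* g_{1,2} = sum_{w in S_3} g_w *)
Definition g12 : A :=
  1 + g 1%N + g 2%N + g 1%N * g 2%N + g 2%N * g 1%N + g 1%N * g 2%N * g 1%N.

Definition r12 : A :=
  \sum_(a < d) \sum_(b < d)
     (tpow (t 1%N) a%:Z * tpow (t 2%N) (b%:Z - a%:Z) * tpow (t 3%N) (- b%:Z)) * g12.

Definition YH_rels (n : nat) (u : CC) : Prop :=
  (forall i j, (1 <= i < n)%N -> (1 <= j < n)%N ->
     (i.+1 < j)%N || (j.+1 < i)%N -> g i * g j = g j * g i) /\
  (forall i, (1 <= i)%N -> (i.+1 < n)%N ->
     g i.+1 * g i * g i.+1 = g i * g i.+1 * g i) /\
  (forall i j, (1 <= i <= n)%N -> (1 <= j <= n)%N -> t i * t j = t j * t i) /\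
  (forall i, (1 <= i <= n)%N -> t i ^+ d = 1) /\
  (forall i, (1 <= i < n)%N -> g i * t i = t i.+1 * g i) /\
  (forall i, (1 <= i < n)%N -> g i * t i.+1 = t i * g i) /\
  (forall i j, (1 <= i < n)%N -> (1 <= j <= n)%N -> j != i -> j != i.+1 ->
     g i * t j = t j * g i) /\
  (forall i, (1 <= i < n)%N ->
     g i ^+ 2 = 1 + (u - 1) *: ei i + (u - 1) *: (ei i * g i)).

End YH.

(* Write e_{x,y} = 1/d sum_s x^s y^(d-s) for commuting d-th roots of unity x, y.
   Then x e_{x,y} = y e_{x,y}; hence e_{x,y} is a symmetric idempotent and
   e_{x,z} e_{x,y} = e_{y,z} e_{x,y}.  Conjugation by g_1 fixes e_1 and swaps e_2
   with e_{1,3}, conjugation by g_2 fixes e_2 and swaps e_1 with e_{1,3}, and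
   e_1 e_{1,3} = e_{1,3} e_2 = e_1 e_2, so E = e_1 e_2 commutes with g_1 and g_2.
   Moreover r_{1,2} = d^2 E g_{1,2} and g_{1,2} = (1 + g_i) * (...) for i = 1, 2,
   where the quadratic relation gives g_i (1 + g_i) = (1 + (u-1) e_i)(1 + g_i).
   This proves (1) and (2); relations (3)-(5) then follow from (1) and (2) alone,
   for any element in place of r_{1,2}, moving e's across g's as above. *)

From HB Require Import structures.
From mathcomp Require Import all_boot all_algebra.
From mathcomp Require Import complex Rstruct zify ring.
Import GRing.Theory Num.Theory.
Local Open Scope ring_scope.
Set Implicit Arguments. Unset Strict Implicit.

Lemma mulrX_intertwine (R : pzRingType) (g x x' : R) k :
  g * x = x' * g -> g * x ^+ k = x' ^+ k * g.
Proof.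
move=> gx; elim: k => [|k IHk]; first by rewrite !expr0 mul1r mulr1.
by rewrite exprSr mulrA IHk -mulrA gx mulrA -exprSr.
Qed.

Lemma commrZ (F : fieldType) (A : algType F) (k : F) (a x : A) :
  GRing.comm a x -> GRing.comm a (k *: x).
Proof. by move=> cax; rewrite /GRing.comm -scalerAr -scalerAl cax. Qed.

Lemma mulrDZl (F : fieldType) (A : algType F) (x y w : A) (k : F) :
  x * w + k *: (y * w) = (x + k *: y) * w.
Proof. by rewrite mulrDl scalerAl. Qed.

Lemma scalerAlr (F : fieldType) (A : algType F) (a b : F) (x y : A) :
  a *: x * (b *: y) = (a * b) *: (x * y).
Proof. by rewrite -scalerAl -scalerAr scalerA. Qed.

Lemma quadratic_mul_1Dr (F : fieldType) (A : algType F) (c : F) (e g : A) :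
  g ^+ 2 = 1 + c *: e + c *: (e * g) -> g * (1 + g) = (1 + c *: e) * (1 + g).
Proof.
move=> gsq; rewrite mulrDr mulr1 -expr2 gsq mulrDl mul1r mulrDr mulr1 scalerAl.
by rewrite !addrA [g + 1]addrC.
Qed.

Section RootIdempotent.
Variables (F : fieldType) (A : algType F) (d : nat).

Definition esum (x y : A) : A := \sum_(s < d) x ^+ s * y ^+ (d - s).
Definition eidem (x y : A) : A := (d%:R : F)^-1 *: esum x y.

Lemma eidem_intertwine (g x y x' y' : A) :
  g * x = x' * g -> g * y = y' * g -> g * eidem x y = eidem x' y' * g.
Proof.
move=> gx gy; rewrite -scalerAl -scalerAr mulr_sumr mulr_suml; congr (_ *: _).
apply: eq_bigr => s _.
by rewrite mulrA (mulrX_intertwine _ gx) -mulrA (mulrX_intertwine _ gy) mulrA.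
Qed.

Lemma comm_eidem (a x y : A) :
  GRing.comm a x -> GRing.comm a y -> GRing.comm a (eidem x y).
Proof. exact: eidem_intertwine. Qed.

Section Absorption.
Variables x y : A.
Hypotheses (cxy : GRing.comm x y) (xd : x ^+ d = 1) (yd : y ^+ d = 1).

(* Multiplying by x shifts the summation index: the last term x^d becomes y^d. *)
Lemma mul_eidem : x * eidem x y = y * eidem x y.
Proof.
rewrite -!scalerAr /esum; congr (_ *: _); case: d xd yd => [|m] xm ym.
  by rewrite !big_ord0 !mulr0.
rewrite !mulr_sumr big_ord_recr big_ord_recl /= subSnn subn0 expr1 expr0.
rewrite mul1r ym mulr1 mulrA -exprS xm mul1r addrC; congr (_ + _).
apply: eq_bigr => i _; rewrite /bump /= add1n mulrA -exprS.
have cyx : GRing.comm y (x ^+ i.+1) by apply/commrX/commr_sym.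
rewrite mulrA cyx -mulrA -exprS; congr (_ * _ ^+ _).
by have := ltn_ord i; lia.
Qed.

Lemma mulX_eidem k : x ^+ k * eidem x y = y ^+ k * eidem x y.
Proof.
elim: k => [|k IHk]; first by rewrite !expr0.
rewrite !exprS -!mulrA IHk !mulrA (commrX k cxy) -mulrA mul_eidem mulrA.
by rewrite -(commrX k (commr_refl y)).
Qed.

Lemma esum_terms_mul_eidem s : (s <= d)%N ->
  x ^+ s * y ^+ (d - s) * eidem x y = eidem x y /\
  y ^+ s * x ^+ (d - s) * eidem x y = eidem x y.
Proof.
move=> sd; have cs : GRing.comm (x ^+ s) (y ^+ (d - s)) by apply/commrX/commr_sym/commrX.
by rewrite cs -!mulrA !mulX_eidem !mulrA -!exprD subnK // subnKC // yd mul1r.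
Qed.

Hypothesis d_neq0 : (d%:R : F) != 0.

Lemma sum_terms_mul_eidem (f : 'I_d -> A) :
  (forall s : 'I_d, f s * eidem x y = eidem x y) ->
  ((d%:R : F)^-1 *: \sum_(s < d) f s) * eidem x y = eidem x y.
Proof.
move=> fe; rewrite -scalerAl mulr_suml (eq_bigr _ (fun s _ => fe s)).
by rewrite sumr_const card_ord -scaler_nat scalerA mulVf ?scale1r.
Qed.

Lemma eidem_idem : eidem x y * eidem x y = eidem x y.
Proof.
by apply: sum_terms_mul_eidem => s; case: (esum_terms_mul_eidem (ltnW (ltn_ord s))) => ->.
Qed.

Lemma eidem_swap_mul : eidem y x * eidem x y = eidem x y.
Proof.
by apply: sum_terms_mul_eidem => s; case: (esum_terms_mul_eidem (ltnW (ltn_ord s))) => _ ->.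
Qed.

End Absorption.

Lemma esumE (x y : A) : (d%:R : F) != 0 -> esum x y = d%:R *: eidem x y.
Proof. by move=> dn0; rewrite scalerA mulfV ?scale1r. Qed.

Lemma eidemC (x y : A) : (d%:R : F) != 0 ->
  GRing.comm x y -> x ^+ d = 1 -> y ^+ d = 1 -> eidem x y = eidem y x.
Proof.
move=> dn0 cxy xd yd; have cyx := commr_sym cxy.
have ce : GRing.comm (eidem x y) (eidem y x).
  by apply/comm_eidem; apply/commr_sym/comm_eidem => //; apply: commr_refl.
by rewrite -(eidem_swap_mul cxy) // -ce eidem_swap_mul.
Qed.

Lemma eidem_transfer (x y z : A) :
  GRing.comm x y -> GRing.comm x z -> GRing.comm y z ->
  x ^+ d = 1 -> y ^+ d = 1 -> z ^+ d = 1 ->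
  eidem x z * eidem x y = eidem y z * eidem x y.
Proof.
move=> cxy cxz cyz xd yd zd; rewrite -!scalerAl; congr (_ *: _).
rewrite !mulr_suml; apply: eq_bigr => s _.
rewrite (commrX _ (commr_sym (commrX _ (commr_sym cxz)))).
rewrite (commrX _ (commr_sym (commrX _ (commr_sym cyz)))).
by rewrite -!mulrA mulX_eidem.
Qed.

End RootIdempotent.

Section ThreeStrands.
Variables (F : fieldType) (A : algType F) (d : nat) (u : F) (t1 t2 t3 g1 g2 : A).
Hypothesis d_neq0 : (d%:R : F) != 0.
Hypotheses (c12 : GRing.comm t1 t2) (c13 : GRing.comm t1 t3) (c23 : GRing.comm t2 t3).
Hypotheses (t1d : t1 ^+ d = 1) (t2d : t2 ^+ d = 1) (t3d : t3 ^+ d = 1).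
Hypotheses (g1t1 : g1 * t1 = t2 * g1) (g1t2 : g1 * t2 = t1 * g1) (g1t3 : g1 * t3 = t3 * g1).
Hypotheses (g2t1 : g2 * t1 = t1 * g2) (g2t2 : g2 * t2 = t3 * g2) (g2t3 : g2 * t3 = t2 * g2).
Hypothesis braid : g2 * g1 * g2 = g1 * g2 * g1.

Local Notation e1 := (eidem d t1 t2).
Local Notation e2 := (eidem d t2 t3).
Local Notation e13 := (eidem d t1 t3).
Local Notation c := (u - 1).

Hypotheses (g1_sq : g1 ^+ 2 = 1 + c *: e1 + c *: (e1 * g1))
           (g2_sq : g2 ^+ 2 = 1 + c *: e2 + c *: (e2 * g2)).

Lemma comm_e1e2 : GRing.comm e1 e2.
Proof. by apply/comm_eidem; apply/commr_sym/comm_eidem; by [|apply: commr_sym]. Qed.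

Lemma comm_e1e13 : GRing.comm e1 e13.
Proof. by apply/comm_eidem; apply/commr_sym/comm_eidem; by [|apply: commr_refl]. Qed.

Lemma comm_e2e13 : GRing.comm e2 e13.
Proof.
by apply/comm_eidem; apply/commr_sym/comm_eidem; by [|apply: commr_sym|apply: commr_refl].
Qed.

Lemma e1_e13 : e1 * e13 = e1 * e2.
Proof. by rewrite comm_e1e13 comm_e1e2 eidem_transfer. Qed.

Lemma e13_e2 : e13 * e2 = e1 * e2.
Proof.
rewrite (eidemC d_neq0 c13) // (eidemC d_neq0 c23) // (eidemC d_neq0 c12) //.
by rewrite eidem_transfer //; apply: commr_sym.
Qed.

Lemma e2_e1 : e2 * e1 = e1 * e2.
Proof. by rewrite comm_e1e2. Qed.

Lemma e2_e13 : e2 * e13 = e1 * e2.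
Proof. by rewrite comm_e2e13 e13_e2. Qed.

Lemma e2_e1e2 : e2 * (e1 * e2) = e1 * e2.
Proof. by rewrite mulrA e2_e1 -mulrA eidem_idem. Qed.

Lemma g1_e1 : g1 * e1 = e1 * g1.
Proof. by rewrite (eidem_intertwine _ g1t1 g1t2) -eidemC //; apply: commr_sym. Qed.

Lemma g1_e2 : g1 * e2 = e13 * g1.
Proof. exact: eidem_intertwine. Qed.

Lemma g1_e13 : g1 * e13 = e2 * g1.
Proof. exact: eidem_intertwine. Qed.

Lemma g2_e1 : g2 * e1 = e13 * g2.
Proof. exact: eidem_intertwine. Qed.

Lemma g2_e2 : g2 * e2 = e2 * g2.
Proof. by rewrite (eidem_intertwine _ g2t2 g2t3) -eidemC //; apply: commr_sym. Qed.

Lemma g1_e1e2 : g1 * (e1 * e2) = e1 * e2 * g1.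
Proof. by rewrite mulrA g1_e1 -mulrA g1_e2 mulrA e1_e13 -mulrA. Qed.

Lemma g2_e1e2 : g2 * (e1 * e2) = e1 * e2 * g2.
Proof. by rewrite mulrA g2_e1 -mulrA g2_e2 mulrA e13_e2 -mulrA. Qed.

Local Notation gsum := (1 + g1 + g2 + g1 * g2 + g2 * g1 + g1 * g2 * g1).

Lemma gsum_factor1 : gsum = (1 + g1) * (1 + g2 + g2 * g1).
Proof.
rewrite mulrDl !mul1r !mulrDr !mulr1 !mulrA !addrA; congr (_ + _).
by rewrite [LHS]addrAC; congr (_ + _); rewrite [1 + _ + _]addrAC [LHS]addrAC.
Qed.

Lemma gsum_factor2 : gsum = (1 + g2) * (1 + g1 + g1 * g2).
Proof.
rewrite mulrDl !mul1r !mulrDr !mulr1 !mulrA braid !addrA.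
by congr (_ + _ + _); rewrite addrAC.
Qed.

Lemma g1_gsum : g1 * gsum = (1 + c *: e1) * gsum.
Proof. by rewrite gsum_factor1 mulrA (quadratic_mul_1Dr g1_sq) mulrA. Qed.

Lemma g2_gsum : g2 * gsum = (1 + c *: e2) * gsum.
Proof. by rewrite gsum_factor2 mulrA (quadratic_mul_1Dr g2_sq) mulrA. Qed.

Local Notation E := (e1 * e2).

Lemma comm_E_1De1 : GRing.comm E (1 + c *: e1).
Proof.
apply: (commrD (commr1 _)); apply: commrZ.
by apply/commr_sym/commrM; [apply: commr_refl | apply: comm_e1e2].
Qed.

Lemma comm_E_1De2 : GRing.comm E (1 + c *: e2).
Proof.
apply: (commrD (commr1 _)); apply: commrZ.
by apply/commr_sym/commrM; [apply/commr_sym/comm_e1e2 | apply: commr_refl].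
Qed.

Lemma g1_Egsum : g1 * (E * gsum) = (1 + c *: e1) * (E * gsum).
Proof. by rewrite mulrA g1_e1e2 -mulrA g1_gsum [LHS]mulrA comm_E_1De1 [RHS]mulrA. Qed.

Lemma g2_Egsum : g2 * (E * gsum) = (1 + c *: e2) * (E * gsum).
Proof. by rewrite mulrA g2_e1e2 -mulrA g2_gsum [LHS]mulrA comm_E_1De2 [RHS]mulrA. Qed.

Lemma e13_e1 : e13 * e1 = E.
Proof. by rewrite -comm_e1e13 e1_e13. Qed.

Lemma e2_mul_g1g2_coeff :
  e2 * (1 + c *: e1 + c *: e13 + c ^+ 2 *: E) = e2 + (c + c + c ^+ 2) *: E.
Proof.
by rewrite !mulrDr mulr1 -!(scalerAr c e2) -(scalerAr (c ^+ 2) e2) e2_e1 e2_e13 e2_e1e2 !scalerDl !addrA.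
Qed.

Section Eigenvector.
Variable w : A.
Hypotheses (g1w : g1 * w = (1 + c *: e1) * w) (g2w : g2 * w = (1 + c *: e2) * w).

Lemma g1_e2w : g1 * (e2 * w) = (e13 + c *: E) * w.
Proof. by rewrite mulrA g1_e2 -mulrA g1w mulrA mulrDr mulr1 -(scalerAr c) e13_e1. Qed.

Lemma g2_e1w : g2 * (e1 * w) = (e13 + c *: E) * w.
Proof. by rewrite mulrA g2_e1 -mulrA g2w mulrA mulrDr mulr1 -(scalerAr c) e13_e2. Qed.

Lemma g1g2_w : g1 * g2 * w = (1 + c *: e1 + c *: e13 + c ^+ 2 *: E) * w.
Proof.
rewrite -mulrA g2w mulrDl mul1r -(scalerAl c) mulrDr -(scalerAr c) g1w g1_e2w mulrDZl.
by rewrite scalerDr scalerA -expr2 addrA.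
Qed.

Lemma g2g1_w : g2 * g1 * w = (1 + c *: e2 + c *: e13 + c ^+ 2 *: E) * w.
Proof.
rewrite -mulrA g1w mulrDl mul1r -(scalerAl c) mulrDr -(scalerAr c) g2w g2_e1w mulrDZl.
by rewrite scalerDr scalerA -expr2 addrA.
Qed.

Lemma g1g2g1_w :
  g1 * g2 * g1 * w = (1 + c *: (e1 + e2 + e13) + (c ^+ 2 * (u + 2)) *: E) * w.
Proof.
have g1g2_e1 : g1 * g2 * e1 = e2 * (g1 * g2) by rewrite -mulrA g2_e1 mulrA g1_e13 -mulrA.
rewrite -mulrA g1w mulrDl mul1r -(scalerAl c) mulrDr -(scalerAr c) g1g2_w.
rewrite [g1 * g2 * _]mulrA g1g2_e1 -[e2 * (g1 * g2) * w]mulrA g1g2_w mulrA.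
rewrite e2_mul_g1g2_coeff mulrDZl; congr (_ * _).
have -> : c ^+ 2 * (u + 2) = c ^+ 2 + c * (c + c + c ^+ 2) by ring.
rewrite !scalerDr scalerDl -scalerA !addrA; congr (_ + _).
by rewrite [LHS]addrAC; congr (_ + _); rewrite addrAC.
Qed.

Lemma eigenvector_relations :
  [/\ g1 * w = (1 + c *: e1) * w, g2 * w = (1 + c *: e2) * w,
      g1 * g2 * w = (1 + c *: e1 + c *: e13 + c ^+ 2 *: E) * w,
      g2 * g1 * w = (1 + c *: e2 + c *: e13 + c ^+ 2 *: E) * w &
      g1 * g2 * g1 * w = (1 + c *: (e1 + e2 + e13) + (c ^+ 2 * (u + 2)) *: E) * w].
Proof. by split; [| | exact: g1g2_w | exact: g2g1_w | exact: g1g2g1_w]. Qed.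

End Eigenvector.

Lemma scaled_Egsum_relations (k : F) : let w := k *: (E * gsum) in
  [/\ g1 * w = (1 + c *: e1) * w, g2 * w = (1 + c *: e2) * w,
      g1 * g2 * w = (1 + c *: e1 + c *: e13 + c ^+ 2 *: E) * w,
      g2 * g1 * w = (1 + c *: e2 + c *: e13 + c ^+ 2 *: E) * w &
      g1 * g2 * g1 * w = (1 + c *: (e1 + e2 + e13) + (c ^+ 2 * (u + 2)) *: E) * w].
Proof. by apply: eigenvector_relations; rewrite -!(scalerAr k) ?g1_Egsum ?g2_Egsum. Qed.

End ThreeStrands.

Lemma tpowE (A : algType CC) (d : nat) (x : A) (k : int) (m : nat) :
  x ^+ d = 1 -> (k %% d%:Z)%Z = (m%:Z %% d%:Z)%Z -> tpow d x k = x ^+ m.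
Proof. by move=> xd km; rewrite /tpow km modz_nat absz_nat expr_mod. Qed.

(* The negative exponents b - a and -b are read as d - a + b and d - b; then the double sum factors. *)
Lemma r12E (A : algType CC) (d : nat) (t g : nat -> A) :
  t 1%N ^+ d = 1 -> t 2%N ^+ d = 1 -> t 3%N ^+ d = 1 ->
  r12 d t g = esum d (t 1%N) (t 2%N) * esum d (t 2%N) (t 3%N) * g12 g.
Proof.
move=> t1d t2d t3d; rewrite /r12 !mulr_suml; apply: eq_bigr => a _.
rewrite mulr_sumr mulr_suml; apply: eq_bigr => b _.
have [a_lt b_lt] := (ltn_ord a, ltn_ord b).
rewrite (tpowE (m := a)) // (tpowE (m := d - a + b)) ?(tpowE (m := d - b)) //.
- by rewrite exprD !mulrA.
- have -> : (- b%:Z = (-1) * d%:Z + (d - b)%N%:Z)%R by lia.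
  by rewrite modzMDl.
- have -> : (b%:Z - a%:Z = (-1) * d%:Z + (d - a + b)%N%:Z)%R by lia.
  by rewrite modzMDl.
Qed.

Theorem lemma5 (d n : nat) (u : CC) (A : algType CC) (t g : nat -> A) :
  (1 <= d)%N -> (3 <= n)%N -> u != 0 -> YH_rels d t g n u ->
  let e1 := ei d t 1%N in let e2 := ei d t 2%N in let e13 := eij d t 1%N 3%N in
  let r := r12 d t g in
  [/\ g 1%N * r = (1 + (u - 1) *: e1) * r,
      g 2%N * r = (1 + (u - 1) *: e2) * r,
      g 1%N * g 2%N * r = (1 + (u - 1) *: e1 + (u - 1) *: e13 + (u - 1) ^+ 2 *: (e1 * e2)) * r,
      g 2%N * g 1%N * r = (1 + (u - 1) *: e2 + (u - 1) *: e13 + (u - 1) ^+ 2 *: (e1 * e2)) * r &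
      g 1%N * g 2%N * g 1%N * r =
        (1 + (u - 1) *: (e1 + e2 + e13) + ((u - 1) ^+ 2 * (u + 2)) *: (e1 * e2)) * r].
Proof.
move=> d_gt0 n_ge3 _ [_ [braid [t_comm [t_root [gt_shift [gt_unshift [gt_far g_sq]]]]]]].
have dn0 : (d%:R : CC) != 0 by rewrite pnatr_eq0 -lt0n.
have rE : r12 d t g = (d%:R * d%:R) *: (ei d t 1 * ei d t 2 * g12 g).
  rewrite r12E; try by apply: t_root; lia.
  by rewrite !(esumE (A := A)) // (scalerAlr (A := A)) [RHS]scalerAl.
rewrite /= rE; apply: scaled_Egsum_relations => //.
all: first [ apply: t_comm | apply: t_root | apply: gt_shift | apply: gt_unshift
           | apply: gt_far | apply: braid | apply: g_sq ]; lia.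
Qed.
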